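(* Let $G=(V,E,p,(V_{E},V_{O}))$ be a parity game and let $\bar\rho$ be the least game parity progress measure of $G$ (least with respect to the pointwise order on functions $V\to\mathbb{M}$). Then for every $v\in V$: (1) there is a strategy $\sigma_{O}$ of player Odd (not necessarily positional) such that every play $\pi$ starting in $v$ and consistent with $\sigma_{O}$ satisfies $\theta(\pi)\ge\bar\rho(v)$; (2) there is a positional strategy $\sigma_{E}$ of player Even such that every play $\pi$ starting in $v$ and consistent with $\sigma_{E}$ satisfies $\theta(\pi)\le\bar\rho(v)$.
   Context: A parity game $G=(V,E,p,(V_{E},V_{O}))$ consists of a finite set $V$ of vertices partitioned into $V_{E}$ (owned by player Even) and $V_{O}$ (owned by player Odd), a total edge relation $E\subseteq V\times V$, and a priority function $p:V\to\mathbb{N}$. Write $\mathrm{post}(v)=\{w:(v,w)\in E\}$ and $V_i=\{v:p(v)=i\}$. A play is an infinite path; Even wins it iff the least priority occurring infinitely often is even, otherwise Odd wins. A strategy of player $X$ is a partial function $\sigma:V^+\to V$ defined only on finite paths ending in a vertex $u_n$ owned by $X$, with value in $\mathrm{post}(u_n)$; positional if its value depends only on the last vertex. A play is consistent with $\sigma$ if $u_{n+1}=\sigma(u_1\cdots u_n)$ whenever defined. Let $d$ be one more than the largest priority. $\mathbb{M}$ consists of $\top$ and all tuples $(m_0,\dots,m_{d-1})\in\mathbb{N}^d$ with $m_i=0$ for even $i$ and $m_i\le|V_i|$ for odd $i$; $\mathbb{M}_{ext}$ consists of $\top$ and all tuples in $\mathbb{N}^d$ that are $0$ at even positions. Tuples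 are ordered lexicographically, $\top$ above all tuples. $m<_i m'$ means $(m_0,\dots,m_i)<(m'_0,\dots,m'_i)$ lexicographically (tuples $<_i\top$, $\top=_i\top$), $m=_i m'$ means agreement on positions $0..i$. For $\rho:V\to\mathbb{M}$ and $w\in\mathrm{post}(v)$, $\mathrm{Prog}(\rho,v,w)$ is the least $m\in\mathbb{M}$ with $m\ge_{p(v)}\rho(w)$ if $p(v)$ is even, and with $m>_{p(v)}\rho(w)$ or $m=\rho(w)=\top$ if $p(v)$ is odd. $\rho$ is a game parity progress measure if each $v\in V_{E}$ has some $w\in\mathrm{post}(v)$ with $\rho(v)\ge_{p(v)}\mathrm{Prog}(\rho,v,w)$, and each $v\in V_{O}$ satisfies this for all $w\in\mathrm{post}(v)$. Play value: for a priority $k$, a $k$-dominated stretch is a finite contiguous part of a play whose minimal priority is $k$; its degree is its number of vertices of priority $k$. $\theta(\pi)\in\mathbb{M}_{ext}$ is $\top$ if Odd wins $\pi$; otherwise it is the tuple with $0$ at even positions and, at each odd position $i$, the degree of the maximal $i$-dominated stretch that is a prefix of $\pi$ ($0$ if none). *)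

From mathcomp Require Import all_boot.

Set Implicit Arguments.
Unset Strict Implicit.
Unset Printing Implicit Defensive.

Section ParityGames.

(* A parity game: vertices V (finite), edge relation E, priority p,
   VE = vertices owned by Even (the complement is owned by Odd). *)
Variable V : finType.
Variable E : rel V.
Variable p : V -> nat.
Variable VE : pred V.

Definition dd : nat := (\max_(v : V) p v).+1.

Definition tup := {ffun 'I_dd -> nat}.

(* elements of M_ext / M : None is Top, Some m is a tuple *)
Definition meas := option tup.

Definition inM (m : meas) : Prop :=
  match m with
  | None => True
  | Some f => forall i : 'I_dd,
      (~~ odd i -> f i = 0) /\ (odd i -> f i <= #|[set v | p v == i]|)
  end.

Definition inMext (m : meas) : Prop :=
  match m with
  | None => True
  | Some f => forall i : 'I_dd, ~~ odd i -> f i = 0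
  end.

Definition tlt_upto (i : nat) (a b : tup) : Prop :=
  exists j : 'I_dd, j <= i /\ (forall k : 'I_dd, k < j -> a k = b k) /\ a j < b j.

Definition teq_upto (i : nat) (a b : tup) : Prop :=
  forall k : 'I_dd, k <= i -> a k = b k.

Definition lt_i (i : nat) (m m' : meas) : Prop :=
  match m, m' with
  | Some a, Some b => tlt_upto i a b
  | Some _, None => True
  | None, _ => False
  end.

Definition eq_i (i : nat) (m m' : meas) : Prop :=
  match m, m' with
  | Some a, Some b => teq_upto i a b
  | None, None => True
  | _, _ => False
  end.

Definition ge_i (i : nat) (m m' : meas) : Prop := lt_i i m' m \/ eq_i i m m'.

Definition mlt (m m' : meas) : Prop := lt_i dd.-1 m m'.
Definition mle (m m' : meas) : Prop := m = m' \/ mlt m m'.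

Definition prog_cond (rho : V -> meas) (v w : V) (m : meas) : Prop :=
  if odd (p v) then lt_i (p v) (rho w) m \/ (m = None /\ rho w = None)
  else ge_i (p v) m (rho w).

Definition IsProg (rho : V -> meas) (v w : V) (m : meas) : Prop :=
  inM m /\ prog_cond rho v w m /\
  forall m', inM m' -> prog_cond rho v w m' -> mle m m'.

Definition gppm (rho : V -> meas) : Prop :=
  (forall v, inM (rho v)) /\
  (forall v, v \in VE ->
     exists w, E v w /\ exists m, IsProg rho v w m /\ ge_i (p v) (rho v) m) /\
  (forall v, v \notin VE ->
     forall w, E v w -> exists m, IsProg rho v w m /\ ge_i (p v) (rho v) m).

Definition least_gppm (rho : V -> meas) : Prop :=
  gppm rho /\ forall rho', gppm rho' -> forall v, mle (rho v) (rho' v).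

Definition play (pi : nat -> V) : Prop := forall n, E (pi n) (pi n.+1).

Definition inf_often (pi : nat -> V) (k : nat) : Prop :=
  forall N, exists n, N <= n /\ p (pi n) = k.

Definition even_wins (pi : nat -> V) : Prop :=
  exists k, inf_often pi k /\ (forall j, j < k -> ~ inf_often pi j) /\ ~~ odd k.

Definition odd_wins (pi : nat -> V) : Prop :=
  exists k, inf_often pi k /\ (forall j, j < k -> ~ inf_often pi j) /\ odd k.

(* players: true = Even, false = Odd *)
Definition owned (X : bool) (v : V) : bool := (v \in VE) == X.

(* A strategy of X: a function on finite sequences; it is only
   meaningful (and constrained) on finite paths x :: s ending in a vertex
   owned by X, where its value must be a successor of the last vertex. *)
Definition strategy (X : bool) (sigma : seq V -> V) : Prop :=
  forall x s, path E x s -> owned X (last x s) -> E (last x s) (sigma (x :: s)).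

Definition positional (X : bool) (sigma : seq V -> V) : Prop :=
  forall x s y t, path E x s -> path E y t -> owned X (last x s) ->
    last x s = last y t -> sigma (x :: s) = sigma (y :: t).

Definition prefix (pi : nat -> V) (n : nat) : seq V := [seq pi k | k <- iota 0 n.+1].

Definition consistent (X : bool) (sigma : seq V -> V) (pi : nat -> V) : Prop :=
  forall n, owned X (pi n) -> pi n.+1 = sigma (prefix pi n).

(* the prefix pi_0 ... pi_{n-1} (n >= 1) is an i-dominated stretch *)
Definition dom_prefix (pi : nat -> V) (i n : nat) : Prop :=
  0 < n /\ (forall k, k < n -> i <= p (pi k)) /\ (exists k, k < n /\ p (pi k) = i).

Definition degree (pi : nat -> V) (i n : nat) : nat :=
  count (fun k => p (pi k) == i) (iota 0 n).

(* c is the degree of the maximal i-dominated stretch that is a prefix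
   of pi (0 if there is none) *)
Definition max_dom_degree (pi : nat -> V) (i c : nat) : Prop :=
  ((exists n, dom_prefix pi i n /\ degree pi i n = c) /\
   (forall n, dom_prefix pi i n -> degree pi i n <= c))
  \/ ((forall n, ~ dom_prefix pi i n) /\ c = 0).

Definition IsTheta (pi : nat -> V) (t : meas) : Prop :=
  (odd_wins pi -> t = None) /\
  (~ odd_wins pi -> exists f, t = Some f /\
     forall i : 'I_dd, (~~ odd i -> f i = 0) /\ (odd i -> max_dom_degree pi i (f i))).

End ParityGames.

From Pilot Require Import Defs.
From mathcomp Require Import all_boot.
From Stdlib Require Import Classical.
From mathcomp Require Import zify.

Set Implicit Arguments.
Unset Strict Implicit.
Unset Printing Implicit Defensive.

(* Even moves at each of its vertices to a successor witnessing the progress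
   condition of the least measure.  Along a play consistent with this
   positional strategy the measures of the visited vertices never increase up
   to the current priority, and strictly decrease up to it at odd priorities;
   since tuples are well-founded, the least priority seen infinitely often is
   even, and a potential adding the visits counted by theta to the current
   measure bounds theta by the measure of the start vertex.

   For Odd, let rho u be the largest element of M that some Odd strategy from
   u guarantees as a lower bound on theta.  One move followed by the
   guaranteeing strategy of the successor shows that rho is a game parity
   progress measure, so the least measure lies below it.  The combined play
   may however have theta outside M; by pigeonhole this happens only when the
   play repeats a vertex of odd priority i inside an i-dominated prefix, and
   Odd avoids it by consulting its strategy on the history with all such
   loops cut out. *)

Lemma wf_minimal (T : Type) (R : T -> T -> Prop) (P : T -> Prop) :
  well_founded R -> (exists x, P x) -> exists x, P x /\ forall y, R y x -> ~ P y.
Proof.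
move=> wfR [x Px]; apply: NNPP => Hno.
suff noP z : Acc R z -> ~ P z by exact: noP (wfR x) Px.
elim=> {}z _ IH Pz; apply: Hno; exists z; split => // y Ryz; exact: IH.
Qed.

Lemma ltn_wf : well_founded (fun m n : nat => m < n).
Proof. by move=> n; elim/ltn_ind: n => n IH; constructor. Qed.

Lemma classical_ex_minn (P : nat -> Prop) :
  (exists n, P n) -> exists n, P n /\ forall m, m < n -> ~ P m.
Proof. exact: wf_minimal ltn_wf. Qed.

Lemma nonincreasing_eventually_const (f : nat -> nat) N :
  (forall n, N <= n -> f n.+1 <= f n) -> exists N', N <= N' /\ forall n, N' <= n -> f n = f N'.
Proof.
move=> Hdec.
have Hmono n m : N <= n -> n <= m -> f m <= f n.
  move=> Hn /subnK <-; elim: (m - n) => [|k IH] //.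
  by rewrite addSn; apply: leq_trans (Hdec _ _) IH; apply: leq_trans Hn (leq_addl _ _).
have Hex : exists c, exists n, N <= n /\ f n = c by exists (f N), N.
have [c [[N' [HN' <-]] Hmin]] := classical_ex_minn Hex.
exists N'; split => // n Hn; apply/eqP; rewrite eqn_leq Hmono //= leqNgt.
by apply/negP => Hlt; apply: (Hmin (f n) Hlt); exists n; split => //; apply: leq_trans Hn.
Qed.

Section LexicographicOrder.
Variable V : finType.
Variable p : V -> nat.

Local Notation D := (dd p).
Local Notation T := (tup p).
Local Notation M := (meas p).

Definition lexlt (a b : T) : Prop :=
  exists j : 'I_D, (forall k : 'I_D, k < j -> a k = b k) /\ a j < b j.

Lemma mlt_Some (a b : T) : mlt (Some a) (Some b) <-> lexlt a b.
Proof.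
split; move=> [j [Hj Hab]]; exists j => //; split => //.
by rewrite -ltnS prednK ?ltn_ord //; apply: leq_ltn_trans (ltn_ord j).
Qed.

Lemma first_diff (a b : T) : a <> b ->
  exists j : 'I_D, (forall k : 'I_D, k < j -> a k = b k) /\ a j <> b j.
Proof.
move=> Hab.
have [i0 Hi0] : exists i, a i != b i.
  apply: NNPP => H; apply: Hab; apply/ffunP => i.
  by apply/eqP; apply: NNPP => Hi; apply: H; exists i; apply/negP.
case: (@arg_minnP _ i0 (fun i => a i != b i) val Hi0) => j Hj Hmin.
exists j; split; last by apply/eqP.
move=> k Hk; apply/eqP; apply: NNPP => /negP Hk'.
by move: (Hmin k Hk'); rewrite leqNgt Hk.
Qed.

Lemma lexlt_total (a b : T) : a = b \/ lexlt a b \/ lexlt b a.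
Proof.
case: (classic (a = b)) => [->|Hab]; first by left.
right; have [j [Heq Hne]] := first_diff Hab.
case: (ltngtP (a j) (b j)) => Hj.
- by left; exists j.
- by right; exists j; split => // k Hk; rewrite Heq.
- by case: Hne.
Qed.

Lemma lexlt_irr (a : T) : ~ lexlt a a.
Proof. by case=> j [_]; rewrite ltnn. Qed.

Lemma lexlt_trans (a b c : T) : lexlt a b -> lexlt b c -> lexlt a c.
Proof.
move=> [j [H1 H2]] [j' [H1' H2']].
case: (ltngtP j j') => Hjj.
- exists j; split; first by move=> k Hk; rewrite H1 // H1' // (ltn_trans Hk Hjj).
  by rewrite -(H1' _ Hjj).
- exists j'; split; first by move=> k Hk; rewrite H1 ?H1' // (ltn_trans Hk Hjj).
  by rewrite (H1 _ Hjj).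
- have e : j = j' by apply: val_inj.
  subst j'; exists j; split; first by move=> k Hk; rewrite H1 ?H1'.
  exact: ltn_trans H2 H2'.
Qed.

Lemma mlt_None (m : M) : ~ mlt None m.
Proof. by []. Qed.

Lemma mle_None (m : M) : mle m None.
Proof. by case: m => [a|]; [right | left]. Qed.

Lemma mlt_trans (m1 m2 m3 : M) : mlt m1 m2 -> mlt m2 m3 -> mlt m1 m3.
Proof.
case: m1 => [a|] //; case: m2 => [b|] //; case: m3 => [c|] //.
rewrite !mlt_Some; exact: lexlt_trans.
Qed.

Lemma mlt_irr (m : M) : ~ mlt m m.
Proof. by case: m => [a|] //; rewrite mlt_Some; apply: lexlt_irr. Qed.

Lemma mle_trans (m1 m2 m3 : M) : mle m1 m2 -> mle m2 m3 -> mle m1 m3.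
Proof.
move=> [->|H1] [<-|H2]; [by left | by right | by right | by right; apply: mlt_trans H1 H2].
Qed.

Lemma mle_mlt_trans (m1 m2 m3 : M) : mle m1 m2 -> mlt m2 m3 -> mlt m1 m3.
Proof. by move=> [->|H1] // H2; apply: mlt_trans H1 H2. Qed.

Lemma mle_mlt_false (m1 m2 : M) : mle m1 m2 -> mlt m2 m1 -> False.
Proof. by move=> H1 H2; apply: (mlt_irr (mle_mlt_trans H1 H2)). Qed.

Lemma mle_total (m1 m2 : M) : mle m1 m2 \/ mlt m2 m1.
Proof.
case: m1 => [a|]; case: m2 => [b|]; try by [left; right | right | left; left].
case: (lexlt_total a b) => [->|[H|H]]; first by left; left.
- by left; right; apply/mlt_Some.
- by right; apply/mlt_Some.
Qed.

Lemma mle_pointwise (a b : T) : (forall i, a i <= b i) -> mle (Some a) (Some b).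
Proof.
move=> Hab; case: (classic (a = b)) => [->|Hne]; first by left.
right; apply/mlt_Some; have [j [Heq Hj]] := first_diff Hne; exists j; split => //.
by rewrite ltn_neqAle Hab andbT; apply/eqP.
Qed.

Lemma mle_ge_i (q : nat) (m m' : M) : mle m m' -> ge_i q m' m.
Proof.
move=> [->|]; first by case: m' => [a|]; right.
case: m => [a|] //; case: m' => [b|] //; last by left.
move=> /mlt_Some [j [Heq Hj]].
case: (leqP j q) => Hjq; first by left; exists j.
by right => k Hk; rewrite Heq // (leq_ltn_trans Hk Hjq).
Qed.

Definition lexlt_below (n : nat) (a b : T) : Prop :=
  exists j : 'I_D, j < n /\ (forall k : 'I_D, k < j -> a k = b k) /\ a j < b j.

Lemma lexlt_below_wf n : n <= D -> well_founded (lexlt_below n).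
Proof.
elim: n => [_ a|n IH HnD]; first by constructor => b [j [Hj _]].
pose o := Ordinal HnD.
suff acc y : Acc (lexlt_below n) y ->
    forall z : T, (forall k : 'I_D, k < n -> z k = y k) -> Acc (lexlt_below n.+1) z.
  move=> a; apply: (acc a); [exact: IH (ltnW HnD) a | by []].
elim=> {}y _ IHy z; move Hc: (z o) => c; elim/ltn_ind: c z Hc => c IHc z Hc Hzy.
constructor => x [j [Hj [Hxz Hlt]]].
case: (ltngtP j n) => Hjn.
- apply: (IHy x _ x (fun _ _ => erefl)); exists j; split => //; split; last by rewrite -Hzy.
  by move=> k Hk; rewrite Hxz // Hzy // (ltn_trans Hk Hjn).
- by move: Hj; rewrite ltnS leqNgt Hjn.
- have ejo : j = o by apply: val_inj.
  apply: (IHc (x o) _ x erefl); first by rewrite -Hc -ejo.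
  by move=> k Hk; rewrite Hxz ?Hzy // Hjn.
Qed.

Lemma lexlt_wf : well_founded lexlt.
Proof.
move=> a; elim: (lexlt_below_wf (leqnn D) a) => {}a _ IH.
by constructor => b [j [Heq Hj]]; apply: IH; exists j.
Qed.

Lemma meas_least (P : M -> Prop) : (exists m, P m) ->
  exists m, P m /\ forall m', P m' -> mle m m'.
Proof.
move=> [m0 Pm0].
case: (classic (exists a, P (Some a))) => [Ha|Hna].
- have [a [Pa Hmin]] := wf_minimal lexlt_wf Ha.
  exists (Some a); split => // [[b|]] Pb; last by right.
  case: (lexlt_total a b) => [->|[H|H]]; [by left | by right; apply/mlt_Some |].
  by case: (Hmin b H).
- exists None; split; first by case: m0 Pm0 => // a Pa; case: Hna; exists a.
  by case=> [b Pb|]; [case: Hna; exists b | left].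
Qed.

(* Reversing each entry against a common bound B turns the lexicographic
   order upside down, so a greatest bounded element comes from [lexlt_wf]. *)
Lemma meas_greatest (P : M -> Prop) (B : nat) : (exists m, P m) ->
  (forall a, P (Some a) -> forall i, a i <= B) ->
  exists m, P m /\ forall m', P m' -> mle m' m.
Proof.
move=> [m0 Pm0] HB.
case: (classic (P None)) => [PN|PN]; first by exists None; split => // m' _; apply: mle_None.
pose rev (a : T) : T := [ffun i => B - a i].
have Hex : exists c, exists a, P (Some a) /\ c = rev a.
  by case: m0 Pm0 => [a Pa|//]; exists (rev a), a.
have [c [[a [Pa ->]] Hmin]] := wf_minimal lexlt_wf Hex.
exists (Some a); split => // [[b|]] Pb //.
case: (lexlt_total b a) => [->|[H|H]]; [by left | by right; apply/mlt_Some |].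
exfalso; apply: (Hmin (rev b)); last by exists b.
case: H => j [Heq Hj]; exists j; split; first by move=> k Hk; rewrite !ffunE Heq.
by rewrite !ffunE; have := HB _ Pb j; have := HB _ Pa j; lia.
Qed.

End LexicographicOrder.

Section PrefixOrder.
Variable V : finType.
Variable p : V -> nat.

Local Notation T := (tup p).
Local Notation M := (meas p).

Definition tge (q : nat) (a b : T) := tlt_upto q b a \/ teq_upto q a b.

Lemma teq_sym q (a b : T) : teq_upto q a b -> teq_upto q b a.
Proof. by move=> H k Hk; rewrite H. Qed.

Lemma teq_trans q (a b c : T) : teq_upto q a b -> teq_upto q b c -> teq_upto q a c.
Proof. by move=> H1 H2 k Hk; rewrite H1 ?H2. Qed.

Lemma tlt_teq_trans q (a b c : T) : tlt_upto q a b -> teq_upto q b c -> tlt_upto q a c.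
Proof.
move=> [j [Hj [H1 H2]]] H3; exists j; split => //; split; last by rewrite -H3.
by move=> k Hk; rewrite H1 // H3 // (leq_trans (ltnW Hk) Hj).
Qed.

Lemma teq_tlt_trans q (a b c : T) : teq_upto q a b -> tlt_upto q b c -> tlt_upto q a c.
Proof.
move=> H3 [j [Hj [H1 H2]]]; exists j; split => //; split; last by rewrite H3.
by move=> k Hk; rewrite H3 ?H1 // (leq_trans (ltnW Hk) Hj).
Qed.

Lemma tlt_trans q (a b c : T) : tlt_upto q a b -> tlt_upto q b c -> tlt_upto q a c.
Proof.
move=> [j [Hj [H1 H2]]] [j' [Hj' [H1' H2']]].
case: (ltngtP j j') => Hjj.
- exists j; split => //; split; first by move=> k Hk; rewrite H1 // H1' // (ltn_trans Hk Hjj).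
  by rewrite -(H1' _ Hjj).
- exists j'; split => //; split; first by move=> k Hk; rewrite H1 ?H1' // (ltn_trans Hk Hjj).
  by rewrite (H1 _ Hjj).
- have e : j = j' by apply: val_inj.
  subst j'; exists j; split => //; split; first by move=> k Hk; rewrite H1 ?H1'.
  exact: ltn_trans H2 H2'.
Qed.

Lemma tlt_teq_false q (a b : T) : tlt_upto q a b -> teq_upto q a b -> False.
Proof. by move=> [j [Hj [_ Hlt]]] Heq; move: Hlt; rewrite Heq // ltnn. Qed.

Lemma tge_trans q (a b c : T) : tge q a b -> tge q b c -> tge q a c.
Proof.
move=> [H1|H1] [H2|H2].
- by left; apply: tlt_trans H2 H1.
- by left; apply: teq_tlt_trans (teq_sym H2) H1.
- by left; apply: tlt_teq_trans H2 (teq_sym H1).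
- by right; apply: teq_trans H1 H2.
Qed.

Lemma tge_le q j (a b : T) : tge q a b -> j <= q -> tge j a b.
Proof.
move=> [[j0 [Hj0 [H1 H2]]]|H] Hjq; last by right => k Hk; rewrite H // (leq_trans Hk Hjq).
case: (leqP j0 j) => Hj; first by left; exists j0.
by right => k Hk; rewrite H1 // (leq_ltn_trans Hk Hj).
Qed.

Lemma ge_i_trans q (m1 m2 m3 : M) : ge_i q m1 m2 -> ge_i q m2 m3 -> ge_i q m1 m3.
Proof.
case: m1 => [a|]; case: m2 => [b|]; case: m3 => [c|] //=; rewrite /ge_i /=; try tauto.
by move=> H1 H2; have := @tge_trans q a b c; rewrite /tge; tauto.
Qed.

Lemma lt_i_ge_i q (m1 m2 m3 : M) : lt_i q m1 m2 -> ge_i q m3 m2 -> lt_i q m1 m3.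
Proof.
case: m1 => [a|]; case: m2 => [b|]; case: m3 => [c|] //=; rewrite /ge_i /=; try tauto.
by move=> H [H2|H2]; [exact: tlt_trans H H2 | exact: tlt_teq_trans H (teq_sym H2)].
Qed.

Lemma ge_i_None q (a : T) : ~ ge_i q (Some a) None.
Proof. by rewrite /ge_i /=; tauto. Qed.

End PrefixOrder.

Section Plays.
Variable V : finType.
Variable p : V -> nat.

Definition ge_prefix (pi : nat -> V) (i n : nat) : Prop := forall k, k < n -> i <= p (pi k).

(* Prefixes without priority i have degree 0, so this is [max_dom_degree]
   without its side conditions (see [max_dom_degreeE]). *)
Definition max_degree (pi : nat -> V) (i c : nat) : Prop :=
  (forall n, ge_prefix pi i n -> degree p pi i n <= c) /\
  (exists n, ge_prefix pi i n /\ degree p pi i n = c).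

Lemma degreeS pi i n : degree p pi i n.+1 = degree p pi i n + (p (pi n) == i).
Proof. by rewrite /degree -addn1 iotaD count_cat /= addn0 add0n. Qed.

Lemma degree_mono pi i m n : m <= n -> degree p pi i m <= degree p pi i n.
Proof.
move=> /subnK <-; elim: (n - m) => [|k IH] //; rewrite addSn degreeS.
exact: leq_trans IH (leq_addr _ _).
Qed.

Lemma degree_shift pi i n :
  degree p pi i n.+1 = (p (pi 0) == i) + degree p (fun k => pi k.+1) i n.
Proof.
rewrite /degree /= -[X in iota X _](addn0 1) iotaDl count_map.
by congr (_ + _); apply: eq_count => k /=; rewrite add1n.
Qed.

Lemma degree_gt0P pi i n : 0 < degree p pi i n <-> exists k, k < n /\ p (pi k) = i.
Proof.
rewrite /degree -has_count; split.
  by move=> /hasP [k]; rewrite mem_iota add0n => /andP [_ Hk] /eqP Hp; exists k.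
by move=> [k [Hk Hp]]; apply/hasP; exists k; rewrite ?mem_iota ?Hp.
Qed.

Lemma max_degree_uniq pi i c c' : max_degree pi i c -> max_degree pi i c' -> c = c'.
Proof.
move=> [H1 [n [Sn Hc]]] [H1' [n' [Sn' Hc']]].
by have := H1 n' Sn'; have := H1' n Sn; lia.
Qed.

Lemma max_dom_degreeE pi i c : max_dom_degree p pi i c <-> max_degree pi i c.
Proof.
have dom_of_pos m : ge_prefix pi i m -> 0 < degree p pi i m -> dom_prefix p pi i m.
  move=> Sm Hpos; split; first by case: m Sm Hpos.
  by split => //; apply/degree_gt0P.
split.
- case=> [[[n [[_ [Sn _]] <-]] Hmax] | [Hno ->]].
  + split; last by exists n.
    move=> m Sm; case: (posnP (degree p pi i m)) => [->//|Hpos].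
    exact/Hmax/dom_of_pos.
  + split; last by exists 0.
    move=> m Sm; case: (posnP (degree p pi i m)) => [->//|Hpos].
    by case: (Hno m); apply: dom_of_pos.
- move=> [Hmax [n [Sn Hn]]]; case: (posnP c) => Hc.
  + right; split => // m [_ [Sm /degree_gt0P Hpos]].
    by move: (Hmax m Sm); rewrite Hc leqn0 => /eqP Hm; rewrite Hm in Hpos.
  + left; split; last by move=> m [_ [Sm _]]; apply: Hmax.
    by exists n; split => //; apply: dom_of_pos; rewrite // Hn.
Qed.

Lemma inf_often_shift (pi1 pi2 : nat -> V) A B k :
  (forall m, pi1 (A + m) = pi2 (B + m)) -> inf_often p pi1 k -> inf_often p pi2 k.
Proof.
move=> Ht Hinf N; have [n [Hn Hp]] := Hinf (N + A).
exists (B + (n - A)); split; first by lia.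
by rewrite -Ht subnKC // (leq_trans (leq_addl _ _) Hn).
Qed.

Lemma odd_wins_shift (pi1 pi2 : nat -> V) A B :
  (forall m, pi1 (A + m) = pi2 (B + m)) -> odd_wins p pi1 <-> odd_wins p pi2.
Proof.
move=> Ht; have Ht' m : pi2 (B + m) = pi1 (A + m) by [].
split => -[k [H1 [H2 H3]]]; exists k.
- split; first exact: inf_often_shift Ht H1.
  by split=> // j Hj Hi; apply: (H2 j Hj); apply: inf_often_shift Ht' Hi.
- split; first exact: inf_often_shift Ht' H1.
  by split=> // j Hj Hi; apply: (H2 j Hj); apply: inf_often_shift Ht Hi.
Qed.

Lemma not_inf_often (pi : nat -> V) j :
  ~ inf_often p pi j -> exists N, forall n, N <= n -> p (pi n) <> j.
Proof.
move=> H; apply: NNPP => H'; apply: H => N; apply: NNPP => H2; apply: H'.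
by exists N => n Hn Hp; apply: H2; exists n.
Qed.

Lemma eventually_ge (pi : nat -> V) k : (forall j, j < k -> ~ inf_often p pi j) ->
  exists N, forall n, N <= n -> k <= p (pi n).
Proof.
elim: k => [|k IH] H; first by exists 0.
have [N1 HN1] := IH (fun j Hj => H j (ltnW Hj)).
have [N2 HN2] := not_inf_often (H k (ltnSn k)).
exists (maxn N1 N2) => n Hn.
have := HN1 n (leq_trans (leq_maxl _ _) Hn); have := HN2 n (leq_trans (leq_maxr _ _) Hn).
by rewrite leq_eqVlt => Hne /orP [/eqP Hk|//]; case: Hne.
Qed.

Lemma least_inf_often (pi : nat -> V) :
  exists k, inf_often p pi k /\ forall j, j < k -> ~ inf_often p pi j.
Proof.
have [v Hv] : exists v, forall N, exists n, N <= n /\ pi n = v.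
  apply: NNPP => H.
  have H' v : exists N, forall n, N <= n -> pi n <> v.
    apply: NNPP => H2; apply: H; exists v => N; apply: NNPP => H3; apply: H2.
    by exists N => n Hn Hpn; apply: H3; exists n.
  have [Nf HNf] := fin_all_exists H'.
  by apply: (HNf (pi (\max_v Nf v)) (\max_v Nf v)) => //; apply: leq_bigmax.
have Hpv : inf_often p pi (p v).
  by move=> N; have [n [Hn Hpn]] := Hv N; exists n; rewrite Hpn.
have [k [Hk Hmin]] := classical_ex_minn (ex_intro (inf_often p pi) _ Hpv).
by exists k.
Qed.

Lemma IsTheta_Some (pi : nat -> V) f : IsTheta pi (Some f) -> ~ odd_wins p pi /\
  forall i : 'I_(dd p), (~~ odd i -> f i = 0) /\ (odd i -> max_degree pi i (f i)).
Proof.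
case=> H1 H2; have Hn : ~ odd_wins p pi by move/H1.
split=> //; have [f' [[<-] Hf']] := H2 Hn.
by move=> i; have [Ha Hb] := Hf' i; split=> // /Hb /max_dom_degreeE.
Qed.

Lemma IsTheta_None (pi : nat -> V) : IsTheta (p:=p) pi None -> odd_wins p pi.
Proof. by case=> _ H2; apply: NNPP => /H2 [f [Hf _]]. Qed.

Lemma max_degree_exists (pi : nat -> V) i :
  ~ odd_wins p pi -> odd i -> exists c, max_degree pi i c.
Proof.
move=> Hno Hodd.
suff [L [SL HL]] : exists L, ge_prefix pi i L /\
    forall n, ge_prefix pi i n -> degree p pi i n <= degree p pi i L.
  by exists (degree p pi i L); split => //; exists L.
case: (classic (exists t, p (pi t) < i)) => [Hex|Hall].
- have [L [HL Hmin]] := classical_ex_minn Hex.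
  exists L; split; first by move=> k Hk; rewrite leqNgt; apply/negP => /Hmin; apply.
  move=> n Sn; apply: degree_mono; rewrite leqNgt; apply/negP => HLn.
  by have := Sn L HLn; rewrite leqNgt HL.
- have Hge t : i <= p (pi t) by rewrite leqNgt; apply/negP => H; apply: Hall; exists t.
  have [N HN] : exists N, forall n, N <= n -> p (pi n) <> i.
    apply: not_inf_often => Hinf; apply: Hno; exists i; split => //; split => // j Hj Hinf2.
    by have [n [_ Hn]] := Hinf2 0; have := Hge n; rewrite Hn leqNgt Hj.
  exists N; split => [k _|n _]; first exact: Hge.
  case: (leqP n N) => Hn; first exact: degree_mono.
  rewrite -(subnKC (ltnW Hn)); elim: (n - N) => [|m IH]; first by rewrite addn0.
  by rewrite addnS degreeS; move/eqP/negbTE: (HN (N + m) (leq_addr _ _)) => ->; rewrite addn0.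
Qed.

Lemma theta_exists (pi : nat -> V) : exists t, IsTheta (p:=p) pi t.
Proof.
case: (classic (odd_wins p pi)) => Hw; first by exists None; split => // /(_ Hw).
have H (i : 'I_(dd p)) :
    exists c, (~~ odd i -> c = 0) /\ (odd i -> max_dom_degree p pi i c).
  case Ho: (odd i); last by exists 0.
  by have [c Hc] := max_degree_exists Hw Ho; exists c; split => // _; apply/max_dom_degreeE.
have [g Hg] := fin_all_exists H.
exists (Some [ffun i => g i]); split => // _; exists [ffun i => g i]; split => // i.
by rewrite ffunE; apply: Hg.
Qed.

End Plays.

Section Descent.
Variable V : finType.
Variable p : V -> nat.

Local Notation D := (dd p).
Local Notation T := (tup p).

Lemma tge_chain_eventually_teq k N (a : nat -> T) :
  (forall n, N <= n -> tge k (a n) (a n.+1)) ->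
  exists N', forall n, N' <= n -> teq_upto k (a n) (a N').
Proof.
move=> Hge.
suff: forall i, i <= k.+1 -> exists N', N <= N' /\
    forall n, N' <= n -> forall o : 'I_D, o < i -> a n o = a N' o.
  by move=> /(_ k.+1 (leqnn _)) [N' [_ H]]; exists N' => n Hn o Ho; apply: H.
elim=> [|i IH] Hi; first by exists N.
have [N1 [HN1 H1]] := IH (ltnW Hi).
case: (ltnP i D) => HiD; last first.
  by exists N1; split => // n Hn o Ho; apply: H1; rewrite // (leq_trans (ltn_ord o) HiD).
pose oi := Ordinal HiD.
have Hdec n : N1 <= n -> a n.+1 oi <= a n oi.
  move=> Hn; case: (Hge n (leq_trans HN1 Hn)) => [[j [Hj [Hj1 Hj2]]]|Heq]; last by rewrite Heq.
  case: (ltngtP j i) => Hji.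
  - by move: Hj2; rewrite (H1 n Hn j Hji) (H1 n.+1 (leqW Hn) j Hji) ltnn.
  - by rewrite Hj1.
  - have -> : oi = j by apply: val_inj; rewrite /= Hji.
    exact: ltnW.
have [N2 [HN2 H2]] := nonincreasing_eventually_const Hdec.
exists N2; split; first exact: leq_trans HN1 HN2.
move=> n Hn o; rewrite ltnS leq_eqVlt => /orP [/eqP Ho|Ho].
- have -> : o = oi by apply: val_inj; rewrite /= Ho.
  exact: H2.
- by rewrite (H1 n (leq_trans HN2 Hn) o Ho) (H1 N2 HN2 o Ho).
Qed.

Definition descent (pi : nat -> V) (a : nat -> T) : Prop :=
  forall n, if odd (p (pi n)) then tlt_upto (p (pi n)) (a n.+1) (a n)
            else tge (p (pi n)) (a n) (a n.+1).

Variable pi : nat -> V.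
Variable a : nat -> T.
Hypothesis Hdesc : descent pi a.

Lemma descent_tge n : tge (p (pi n)) (a n) (a n.+1).
Proof. by have := Hdesc n; case: ifP => _ // H; left. Qed.

Lemma descent_not_odd_wins : ~ odd_wins p pi.
Proof.
move=> [k [Hinf [Hlow Hodd]]].
have [N HN] := eventually_ge Hlow.
have [N' HN'] : exists N', forall n, N' <= n -> teq_upto k (a n) (a N').
  by apply: (@tge_chain_eventually_teq k N) => n Hn; apply: tge_le (descent_tge n) (HN n Hn).
have [n [Hn Hpn]] := Hinf (maxn N N').
have := Hdesc n; rewrite Hpn Hodd => Hlt.
apply: (tlt_teq_false Hlt); apply: teq_trans (HN' n.+1 _) (teq_sym (HN' n _)).
  by apply: leq_trans (leq_maxr _ _) (leqW Hn).
by apply: leq_trans (leq_maxr _ _) Hn.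
Qed.

Definition ge_prefixb (i k : nat) : bool := all (fun t => i <= p (pi t)) (iota 0 k).

Definition visits (i : 'I_D) (k : nat) : nat :=
  if odd i then count (fun t => (p (pi t) == i) && ge_prefixb i t.+1) (iota 0 k) else 0.

(* Entry i counts the visits to the odd priority i made so far inside the
   i-dominated prefix, plus [a k i] while that prefix lasts.  It never
   increases, starts at [a 0], and eventually bounds every entry of theta. *)
Definition potential (k : nat) : T :=
  [ffun i => visits i k + (if ge_prefixb i k then a k i else 0)].

Lemma ge_prefixbS i k : ge_prefixb i k.+1 = ge_prefixb i k && (i <= p (pi k)).
Proof. by rewrite /ge_prefixb -(addn1 k) iotaD all_cat /= andbT. Qed.

Lemma ge_prefixb_le i j k : i <= j -> ge_prefixb j k -> ge_prefixb i k.
Proof. by move=> Hij /allP H; apply/allP => t /H /(leq_trans Hij). Qed.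

Lemma visitsS i k : visits i k.+1 = visits i k + (odd i && (p (pi k) == i) && ge_prefixb i k.+1).
Proof.
rewrite /visits; case: (odd i) => //.
by rewrite -(addn1 k) iotaD count_cat /= addn0 add0n addn1.
Qed.

Lemma potential0 : potential 0 = a 0.
Proof. by apply/ffunP => i; rewrite ffunE /visits /=; case: (odd i). Qed.

Lemma potentialE k (i : 'I_D) : potential k i = visits i k + (if ge_prefixb i k then a k i else 0).
Proof. by rewrite ffunE. Qed.

Lemma potentialS_gt k (i : 'I_D) : p (pi k) < i -> potential k.+1 i <= potential k i.
Proof.
move=> Hi; rewrite !potentialE visitsS ge_prefixbS (leqNgt i) Hi !andbF addn0.
by rewrite addn0 leq_addr.
Qed.

Lemma potentialS_le k (i : 'I_D) : i <= p (pi k) -> potential k.+1 i =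
  visits i k + (odd i && (p (pi k) == i) && ge_prefixb i k)
  + (if ge_prefixb i k then a k.+1 i else 0).
Proof. by move=> Hi; rewrite potentialE visitsS ge_prefixbS Hi !andbT. Qed.

Lemma potentialS_teq k : ~~ odd (p (pi k)) -> teq_upto (p (pi k)) (a k) (a k.+1) ->
  mle (Some (potential k.+1)) (Some (potential k)).
Proof.
move=> Hq Heq; apply: mle_pointwise => i.
case: (ltnP (p (pi k)) i) => Hqi; first exact: potentialS_gt.
rewrite potentialS_le // potentialE.
have -> : odd i && (p (pi k) == i) = false.
  by case: eqP => [<-|]; [rewrite (negbTE Hq) | rewrite andbF].
by rewrite addn0 Heq.
Qed.

(* If the first decreasing entry j of [a] still counts in the potential, the
   potential decreases at j; otherwise (j was just visited, or the prefix is
   no longer j-dominated) it increases nowhere. *)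
Lemma potentialS_tlt k : tlt_upto (p (pi k)) (a k.+1) (a k) ->
  mle (Some (potential k.+1)) (Some (potential k)).
Proof.
set q := p (pi k); move=> [j [Hj [Heq Hlt]]].
have Hnq (l : 'I_D) : l < j -> (q == l) = false.
  by move=> Hl; apply/negbTE; rewrite neq_ltn (leq_trans Hl Hj) orbT.
case: (boolP (ge_prefixb j k && ~~ (odd j && (q == j)))) => [/andP [Hal Hnj] | Hc].
  right; apply/mlt_Some; exists j; split.
    move=> l Hl; rewrite potentialS_le ?potentialE; last exact: leq_trans (ltnW Hl) Hj.
    by rewrite Hnq // andbF addn0 Heq.
  by rewrite potentialS_le // potentialE (negbTE Hnj) Hal addn0 ltn_add2l.
apply: mle_pointwise => i.
case: (ltnP q i) => Hqi; first exact: potentialS_gt.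
rewrite potentialS_le // potentialE.
case: (ltngtP i j) => Hij.
- by rewrite Hnq // andbF addn0 Heq.
- move: Hc; rewrite negb_and negbK => /orP [Hna|/andP [_ /eqP Hqj]].
    have -> : ge_prefixb i k = false.
      by apply/negbTE; apply: contra Hna; apply: ge_prefixb_le; rewrite ltnW.
    by rewrite andbF !addn0.
  by move: Hqi; rewrite leqNgt Hqj Hij.
- have eij : i = j by apply: val_inj.
  subst i; case: (ge_prefixb j k) => /=; last by rewrite andbF !addn0.
  case: (odd j && (q == j)) => /=; last by rewrite addn0 leq_add2l ltnW.
  by rewrite -addnA leq_add2l add1n.
Qed.

Lemma potential_le k : mle (Some (potential k)) (Some (a 0)).
Proof.
elim: k => [|k IH]; first by rewrite potential0; left.
apply: mle_trans IH; have := Hdesc k; case: ifP => Hq; first exact: potentialS_tlt.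
by case=> [Hlt|Heq]; [exact: potentialS_tlt | apply: potentialS_teq; rewrite ?Hq].
Qed.

Lemma descent_theta_le f : IsTheta pi (Some f) -> mle (Some f) (Some (a 0)).
Proof.
move=> /IsTheta_Some [_ Hf].
have H (i : 'I_D) : exists n, forall K, n <= K -> f i <= potential K i.
  have [He Ho] := Hf i; case Hodd: (odd i); last by exists 0 => K _; rewrite He ?Hodd.
  have [_ [n [Sn <-]]] := Ho Hodd.
  exists n => K HK; rewrite potentialE /visits Hodd; apply: leq_trans (leq_addr _ _).
  rewrite /degree -(subnKC HK) iotaD count_cat; apply: leq_trans (leq_addr _ _).
  apply/eq_leq/eq_in_count => t; rewrite mem_iota add0n => /andP [_ Ht].
  suff -> : ge_prefixb i t.+1 by rewrite andbT.
  apply/allP => t'; rewrite mem_iota add0n ltnS => /andP [_ Ht'].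
  by apply: Sn; apply: leq_ltn_trans Ht' Ht.
have [g Hg] := fin_all_exists H.
apply: mle_trans (potential_le (\max_i g i)).
by apply: mle_pointwise => i; apply: Hg; apply: leq_bigmax.
Qed.

End Descent.

Section Histories.
Variable V : finType.

Lemma prefixS (pi : nat -> V) n : Defs.prefix pi n.+1 = rcons (Defs.prefix pi n) (pi n.+1).
Proof. by rewrite /Defs.prefix -(addn1 n.+1) iotaD map_cat /= add0n cats1. Qed.

Lemma prefix_last (pi : nat -> V) n x0 : last x0 (Defs.prefix pi n) = pi n.
Proof. by case: n => [|n] //; rewrite prefixS last_rcons. Qed.

Lemma map_iotaS (pi : nat -> V) m n :
  map pi (iota m.+1 n) = map (fun k => pi k.+1) (iota m n).
Proof. by elim: n m => [|n IH] m //=; rewrite IH. Qed.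

Lemma prefix_shift (pi : nat -> V) n : Defs.prefix pi n.+1 = pi 0 :: Defs.prefix (fun k => pi k.+1) n.
Proof. by rewrite /Defs.prefix /= map_iotaS. Qed.

End Histories.

Section EvenStrategy.
Variable V : finType.
Variable E : rel V.
Variable p : V -> nat.
Variable VE : pred V.

Local Notation M := (meas p).

Lemma progress_descent (rho : V -> M) (pi : nat -> V) r : rho (pi 0) = Some r ->
  (forall n, exists m, prog_cond rho (pi n) (pi n.+1) m /\ ge_i (p (pi n)) (rho (pi n)) m) ->
  exists a, (forall n, rho (pi n) = Some (a n)) /\ descent pi a.
Proof.
move=> Hr Hprog.
have HSome n : exists b, rho (pi n) = Some b.
  elim: n => [|n [b Hb]]; first by exists r.
  have [m [Hc Hge]] := Hprog n.
  case Hw: (rho (pi n.+1)) => [c|]; first by exists c.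
  exfalso; move: Hc; rewrite /prog_cond Hw Hb in Hge *; case: ifP => _.
  - by move=> [//|[Hm _]]; rewrite Hm in Hge; apply: ge_i_None Hge.
  - by case: m Hge => [c|] Hge; [rewrite /ge_i /=; tauto | move=> _; apply: ge_i_None Hge].
pose a n := if rho (pi n) is Some b then b else r.
have Ha n : rho (pi n) = Some (a n) by rewrite /a; have [b ->] := HSome n.
exists a; split => // n; have [m [Hc Hge]] := Hprog n.
move: Hc; rewrite /prog_cond; case: ifP => _.
- case=> [Hlt|[_ Hw]]; last by move: Hw; rewrite Ha.
  by have := lt_i_ge_i Hlt Hge; rewrite !Ha.
- by move=> Hge2; have := ge_i_trans Hge Hge2; rewrite !Ha /ge_i /tge /=; tauto.
Qed.

Lemma even_positional_strategy (Etotal : forall v, exists w, E v w)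
    (rho : V -> M) (Hrho : gppm E VE rho) (v : V) :
  exists sigmaE : seq V -> V, strategy E VE true sigmaE /\ positional E VE true sigmaE /\
     forall pi : nat -> V, play E pi -> pi 0 = v -> consistent VE true sigmaE pi ->
       forall t, IsTheta pi t -> mle t (rho v).
Proof.
case: Hrho => [_ [HgE HgO]].
have Hch u : exists w, E u w /\
    (u \in VE -> exists m, IsProg rho u w m /\ ge_i (p u) (rho u) m).
  case: (boolP (u \in VE)) => Hu; last by have [w Hw] := Etotal u; exists w.
  by have [w [Euw Hw]] := HgE u Hu; exists w.
have [ch Hch'] := fin_all_exists Hch.
exists (fun s => ch (last v s)); split; [|split].
- by move=> x s _ _; case: (Hch' (last x s)).
- by move=> x s y t _ _ _ /= ->.
move=> pi Hplay Hpi0 Hcons t Ht.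
case Hrv: (rho v) => [r|]; last exact: mle_None.
have Hprog n : exists m,
    prog_cond rho (pi n) (pi n.+1) m /\ ge_i (p (pi n)) (rho (pi n)) m.
  case: (boolP (pi n \in VE)) => Hin.
  - have := Hcons n; rewrite /owned Hin prefix_last => /(_ isT) ->.
    by have [_ /(_ Hin) [m [[_ [Hm _]] Hm2]]] := Hch' (pi n); exists m.
  - by have [m [[_ [Hm _]] Hm2]] := HgO (pi n) Hin (pi n.+1) (Hplay n); exists m.
have Hr : rho (pi 0) = Some r by rewrite Hpi0.
have [a [Ha Hdesc]] := progress_descent Hr Hprog.
case: t Ht => [f|] Ht; last by case: (descent_not_odd_wins Hdesc (IsTheta_None Ht)).
by have := descent_theta_le Hdesc Ht; have := Ha 0; rewrite Hpi0 Hrv => -[<-].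
Qed.

End EvenStrategy.

Lemma last_take_nth (T : Type) (x : T) (s : seq T) n :
  n <= size s -> last x (take n s) = nth x (x :: s) n.
Proof.
move=> Hn; rewrite (last_nth x) size_takel //.
by case: n Hn => [|n] Hn //=; rewrite nth_take.
Qed.

Section CycleCutting.
Variable V : finType.
Variable E : rel V.
Variable p : V -> nat.
Variable VE : pred V.

Definition dominated_odd_loop (pi : nat -> V) : Prop :=
  exists j a b, odd j /\ a < b /\ pi a = pi b /\ p (pi a) = j /\
    forall k, k <= b -> j <= p (pi k).

Definition closes_odd_loop (W : seq V) (x : V) : bool :=
  (x \in W) && odd (p x) && all (fun y => p x <= p y) W.

Definition cut_step (W : seq V) (x : V) : seq V :=
  if closes_odd_loop W x then take (index x W).+1 W else rcons W x.

Definition cut_history (x : V) (s : seq V) : seq V := foldl cut_step [:: x] s.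

(* Odd consults [sigma] on the history from which every loop of odd least
   priority has been cut out, so [sigma] only ever sees loop-free plays. *)
Definition cut_strategy (sigma : seq V -> V) (h : seq V) : V :=
  if h is x :: s then sigma (cut_history x s) else sigma [::].

Lemma closes_odd_loop_mem W x : closes_odd_loop W x -> x \in W.
Proof. by case/andP => /andP []. Qed.

Lemma closes_odd_loop_index W x : closes_odd_loop W x -> (index x W).+1 <= size W.
Proof. by move=> /closes_odd_loop_mem; rewrite -index_mem. Qed.

Lemma cut_history_rcons x s y : cut_history x (rcons s y) = cut_step (cut_history x s) y.
Proof. by rewrite /cut_history foldl_rcons. Qed.

Lemma cut_history_path x s : path E x s ->
  exists W, cut_history x s = x :: W /\ path E x W /\ last x W = last x s.
Proof.
elim/last_ind: s => [|s y IH]; first by exists [::].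
rewrite rcons_path => /andP [Hp He].
have [W [HW [HWp HWl]]] := IH Hp.
rewrite cut_history_rcons HW /cut_step; case: ifP => Hc.
- have Hin := closes_odd_loop_mem Hc.
  exists (take (index y (x :: W)) W); split => //; split; first exact: take_path.
  rewrite last_take_nth ?nth_index ?last_rcons //.
  by move: (index_mem y (x :: W)); rewrite Hin /= ltnS.
- exists (rcons W y); split => //; split; last by rewrite !last_rcons.
  by rewrite rcons_path HWp HWl.
Qed.

Lemma cut_strategy_strategy sigma :
  strategy E VE false sigma -> strategy E VE false (cut_strategy sigma).
Proof.
move=> Hs x s Hp Ho /=.
have [W [-> [HWp HWl]]] := cut_history_path Hp.
by rewrite -HWl; apply: Hs; rewrite ?HWl.
Qed.

Section CutPlay.
Variable sigma : seq V -> V.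
Variable pi : nat -> V.
Hypothesis Hplay : play E pi.
Hypothesis Hcons : consistent VE false (cut_strategy sigma) pi.

Definition cut_prefix t := cut_history (pi 0) (map pi (iota 1 t)).

Lemma cut_prefix0 : cut_prefix 0 = [:: pi 0].
Proof. by []. Qed.

Lemma cut_prefixS t : cut_prefix t.+1 = cut_step (cut_prefix t) (pi t.+1).
Proof.
by rewrite /cut_prefix -(addn1 t) iotaD map_cat cats1 /= add1n addn1 cut_history_rcons.
Qed.

Lemma play_prefix_path t : path E (pi 0) (map pi (iota 1 t)).
Proof.
elim: t => [|t IH] //.
have -> : map pi (iota 1 t.+1) = rcons (map pi (iota 1 t)) (pi t.+1).
  by rewrite -(addn1 t) iotaD map_cat cats1 /= add1n addn1.
rewrite rcons_path IH /=.
by have := prefix_last pi t (pi 0); rewrite /Defs.prefix /= => ->; apply: Hplay.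
Qed.

Lemma cut_prefix_path t :
  exists W, cut_prefix t = pi 0 :: W /\ path E (pi 0) W /\ last (pi 0) W = pi t.
Proof.
have [W [H1 [H2 H3]]] := cut_history_path (play_prefix_path t).
exists W; split => //; split => //; rewrite H3.
by have := prefix_last pi t (pi 0); rewrite /Defs.prefix /=.
Qed.

Lemma cut_prefix_last t x0 : last x0 (cut_prefix t) = pi t.
Proof. by have [W [-> [_ H]]] := cut_prefix_path t. Qed.

Lemma cut_prefix_size_gt0 t : 0 < size (cut_prefix t).
Proof. by have [W [-> _]] := cut_prefix_path t. Qed.

Definition follows (W : seq V) := forall i, i.+1 < size W ->
  owned VE false (nth (pi 0) W i) -> nth (pi 0) W i.+1 = sigma (take i.+1 W).

Lemma cut_prefix_follows t : follows (cut_prefix t).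
Proof.
elim: t => [|t IH]; first by move=> [|i].
rewrite cut_prefixS /cut_step; case: ifP => Hc.
- move=> i; set n := (index _ _).+1 => Hi Ho.
  have Hn : n <= size (cut_prefix t) := closes_odd_loop_index Hc.
  have Hin : i.+1 < n by move: Hi; rewrite size_take_min; lia.
  have Hin' : i < n by apply: ltnW.
  rewrite !nth_take // in Ho *.
  by rewrite take_takel //; apply: IH Ho; apply: leq_trans Hin Hn.
- move=> i; rewrite size_rcons ltnS => Hi.
  rewrite nth_rcons (leq_trans (ltnSn i) Hi).
  case: (ltngtP i.+1 (size (cut_prefix t))) => Hi'.
  + by rewrite nth_rcons Hi' -cats1 takel_cat; [exact: IH | exact: ltnW].
  + by move: Hi; rewrite leqNgt Hi'.
  + have Hlast : nth (pi 0) (cut_prefix t) i = pi t.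
      by rewrite -(cut_prefix_last t (pi 0)) (last_nth (pi 0)) -Hi'.
    rewrite Hlast nth_rcons -Hi' ltnn eqxx -cats1 takel_cat // take_oversize ?Hi' //.
    exact: Hcons.
Qed.

Definition loop_free (W : seq V) :=
  forall b, b < size W -> ~~ closes_odd_loop (take b W) (nth (pi 0) W b).

Lemma cut_prefix_loop_free t : loop_free (cut_prefix t).
Proof.
elim: t => [|t IH]; first by move=> [|b].
rewrite cut_prefixS /cut_step; case: ifP => Hc.
- move=> b; set n := (index _ _).+1 => Hb.
  have Hbn : b < n by move: Hb; rewrite size_take_min; lia.
  rewrite nth_take // take_takel; last exact: ltnW.
  by apply: IH; apply: leq_trans Hbn (closes_odd_loop_index Hc).
- move=> b; rewrite size_rcons ltnS leq_eqVlt => /orP [/eqP ->|Hb].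
  + by rewrite nth_rcons ltnn eqxx -cats1 take_size_cat // Hc.
  + by rewrite nth_rcons Hb -cats1 takel_cat ?IH // ltnW.
Qed.

Definition all_ge (i : nat) (W : seq V) := all (fun y => i <= p y) W.

(* A cut only removes a loop above its (odd) least vertex, which stays. *)
Lemma cut_prefix_all_ge i t : all_ge i (cut_prefix t) -> forall s, s <= t -> i <= p (pi s).
Proof.
elim: t => [|t IH].
  by rewrite cut_prefix0 /all_ge /= andbT => H s; rewrite leqn0 => /eqP ->.
rewrite cut_prefixS /cut_step; case: ifP => Hc.
- have Hmem := closes_odd_loop_mem Hc.
  have Hix : index (pi t.+1) (cut_prefix t) < size (cut_prefix t) by rewrite index_mem.
  rewrite (take_nth (pi 0)) // nth_index // /all_ge all_rcons => /andP [Hx _].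
  have HW : all_ge i (cut_prefix t).
    by move: Hc => /andP [_ /allP H]; apply/allP => y /H; apply: leq_trans Hx.
  by move=> s; rewrite leq_eqVlt => /orP [/eqP ->|Hs] //; apply: IH.
- rewrite /all_ge all_rcons => /andP [Hx HW] s.
  by rewrite leq_eqVlt => /orP [/eqP ->|Hs] //; apply: IH.
Qed.

Lemma cut_prefix_degree i t n : n <= size (cut_prefix t) -> all_ge i (take n (cut_prefix t)) ->
  exists n', n' <= t.+1 /\ ge_prefix p pi i n' /\
    count (fun y => p y == i) (take n (cut_prefix t)) <= degree p pi i n'.
Proof.
elim: t n => [|t IH] n.
  rewrite cut_prefix0 /=; case: n => [|[|]] // _; first by move=> _; exists 0.
  rewrite /all_ge /= andbT => H; exists 1; split => //; split; first by case.
  by rewrite degreeS /= addn0.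
rewrite cut_prefixS /cut_step; case: ifP => Hc.
- set m := (index _ _).+1 => Hn.
  have Hnm : n <= m by move: Hn; rewrite size_take_min; lia.
  rewrite take_takel // => Ha.
  have [n' [H1 H2]] := IH n (leq_trans Hnm (closes_odd_loop_index Hc)) Ha.
  by exists n'; split => //; apply: leq_trans H1 _.
rewrite size_rcons leq_eqVlt => /orP [/eqP ->|]; last rewrite ltnS => Hn.
- rewrite take_oversize ?size_rcons // /all_ge all_rcons => /andP [Hx HW].
  have HW' : all_ge i (take (size (cut_prefix t)) (cut_prefix t)) by rewrite take_size.
  have [n' [H1 [H2 H3]]] := IH (size (cut_prefix t)) (leqnn _) HW'.
  exists t.+2; split => //; split.
    move=> k; rewrite ltnS leq_eqVlt => /orP [/eqP ->|Hk] //.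
    by apply: (cut_prefix_all_ge HW); rewrite -ltnS.
  rewrite take_size in H3; rewrite -cats1 count_cat /= addn0 degreeS.
  by apply: leq_add => //; apply: leq_trans H3 (degree_mono _ _ _ H1).
- rewrite -cats1 takel_cat // => Ha.
  have [n' [H1 H2]] := IH n Hn Ha.
  by exists n'; split => //; apply: leq_trans H1 _.
Qed.

(* If all priorities from time N on are >= k and the even priority k is
   visited at t0 >= N, nothing is cut after t0: the cut histories then grow by
   the actual moves and converge to a play consistent with [sigma]. *)
Section StableTail.
Variables (k N t0 : nat).
Hypothesis Hk : ~~ odd k.
Hypothesis HN : forall n, N <= n -> k <= p (pi n).
Hypothesis Ht0 : N <= t0.
Hypothesis Hpt0 : p (pi t0) = k.

Lemma cut_prefix_grows d : cut_prefix (t0 + d) = cut_prefix t0 ++ map pi (iota t0.+1 d).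
Proof.
elim: d => [|d IH]; first by rewrite addn0 cats0.
rewrite addnS cut_prefixS /cut_step IH.
have Hin : pi t0 \in cut_prefix t0 ++ map pi (iota t0.+1 d).
  rewrite mem_cat; apply/orP; left.
  by have [W [-> [_ HW]]] := cut_prefix_path t0; rewrite -HW; apply: mem_last.
case: ifP => Hc.
  exfalso; move: Hc => /andP [/andP [_ Ho] /allP Ha].
  have H1 := Ha _ Hin; rewrite Hpt0 in H1.
  have H2 : k <= p (pi (t0 + d).+1) by apply: HN; rewrite (leq_trans Ht0) // leqW // leq_addr.
  have e : p (pi (t0 + d).+1) = k by apply/eqP; rewrite eqn_leq H1 H2.
  by move: Ho; rewrite e (negbTE Hk).
by rewrite rcons_cat -(addn1 d) iotaD map_cat /= cats1 addSn.
Qed.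

Definition stable_len := size (cut_prefix t0).

Lemma stable_len_gt0 : 0 < stable_len.
Proof. exact: cut_prefix_size_gt0. Qed.

Definition limit_play n := nth (pi 0) (cut_prefix (t0 + n)) n.

Lemma size_cut_prefix_grows d : size (cut_prefix (t0 + d)) = stable_len + d.
Proof. by rewrite cut_prefix_grows size_cat size_map size_iota. Qed.

Lemma nth_cut_prefix_grows n m : n <= m -> nth (pi 0) (cut_prefix (t0 + m)) n =
  if n < stable_len then nth (pi 0) (cut_prefix t0) n else pi (t0.+1 + (n - stable_len)).
Proof.
move=> Hnm; rewrite cut_prefix_grows nth_cat -/stable_len; case: ifP => // Hn.
have HL := stable_len_gt0.
by rewrite (nth_map 0) ?size_iota ?nth_iota //; lia.
Qed.

Lemma nth_cut_prefix n m : n <= m -> nth (pi 0) (cut_prefix (t0 + m)) n = limit_play n.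
Proof. by move=> Hnm; rewrite /limit_play !nth_cut_prefix_grows. Qed.

Lemma take_cut_prefix n m : n <= m ->
  take n (cut_prefix (t0 + m)) = map limit_play (iota 0 n).
Proof.
move=> Hnm; apply: (@eq_from_nth _ (pi 0)).
  by rewrite size_map size_iota size_takel // size_cut_prefix_grows; lia.
move=> j; rewrite size_takel ?size_cut_prefix_grows; last lia.
move=> Hj; rewrite nth_take // (nth_map 0) ?size_iota // nth_iota // add0n.
by apply: nth_cut_prefix; lia.
Qed.

Lemma limit_play_play : play E limit_play.
Proof.
move=> n; have [W [HW [Hp _]]] := cut_prefix_path (t0 + n.+1).
have Hs : n < size W.
  by have := size_cut_prefix_grows n.+1; rewrite HW /=; have := stable_len_gt0; lia.
have := (pathP (pi 0) Hp) n Hs.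
by rewrite -(nth_cut_prefix (leqnSn n)) -(nth_cut_prefix (leqnn n.+1)) HW.
Qed.

Lemma limit_play_consistent : consistent VE false sigma limit_play.
Proof.
move=> n Ho.
have Hs : n.+1 < size (cut_prefix (t0 + n.+1)).
  by rewrite size_cut_prefix_grows; have := stable_len_gt0; lia.
rewrite /Defs.prefix -(take_cut_prefix (leqnn n.+1)).
have := cut_prefix_follows Hs.
by rewrite (nth_cut_prefix (leqnSn n)) (nth_cut_prefix (leqnn n.+1)); apply.
Qed.

Lemma limit_play_tail m : limit_play (stable_len + m) = pi (t0.+1 + m).
Proof. by rewrite /limit_play nth_cut_prefix_grows // ltnNge leq_addr /= addKn. Qed.

Lemma limit_play_no_loop : ~ dominated_odd_loop limit_play.
Proof.
move=> [j [a [b [Hj [Hab [Heq [Hpa Hall]]]]]]].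
have Hb : b < size (cut_prefix (t0 + b)).
  by rewrite size_cut_prefix_grows; have := stable_len_gt0; lia.
have := cut_prefix_loop_free Hb; rewrite (take_cut_prefix (leqnn b)) /closes_odd_loop.
rewrite (nth_cut_prefix (leqnn b)) -Heq Hpa Hj andbT.
have -> : limit_play a \in map limit_play (iota 0 b) by apply: map_f; rewrite mem_iota.
apply/negP; rewrite negbK; apply/allP => y /mapP [k' Hk' ->].
by apply: Hall; move: Hk'; rewrite mem_iota add0n => /andP [_ /ltnW].
Qed.

Lemma limit_play_degree i n : ge_prefix p limit_play i n ->
  exists n', ge_prefix p pi i n' /\ degree p limit_play i n <= degree p pi i n'.
Proof.
move=> Sn.
have Hn : n <= size (cut_prefix (t0 + n)) by rewrite size_cut_prefix_grows leq_addl.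
have Ha : all_ge i (take n (cut_prefix (t0 + n))).
  rewrite (take_cut_prefix (leqnn n)); apply/allP => y /mapP [k' Hk' ->]; apply: Sn.
  by move: Hk'; rewrite mem_iota add0n => /andP [_ H].
have [n' [_ [H1 H2]]] := cut_prefix_degree Hn Ha.
by exists n'; split => //; move: H2; rewrite (take_cut_prefix (leqnn n)) count_map.
Qed.

End StableTail.

Lemma loop_free_limit_play : ~ odd_wins p pi ->
  exists pi', [/\ play E pi', pi' 0 = pi 0 & consistent VE false sigma pi'] /\
    [/\ ~ dominated_odd_loop pi', (odd_wins p pi' <-> odd_wins p pi) &
      forall i n, ge_prefix p pi' i n ->
        exists n', ge_prefix p pi i n' /\ degree p pi' i n <= degree p pi i n'].
Proof.
move=> Hnw; have [k [Hinf Hlow]] := least_inf_often p pi.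
have Hk : ~~ odd k by apply/negP => Ho; apply: Hnw; exists k.
have [N HN] := eventually_ge Hlow.
have [t0 [Ht0 Hpt0]] := Hinf N.
exists (limit_play t0); split; split.
- exact: limit_play_play Hk HN Ht0 Hpt0.
- by rewrite /limit_play addn0; have [W [-> _]] := cut_prefix_path t0.
- exact: limit_play_consistent Hk HN Ht0 Hpt0.
- exact: limit_play_no_loop Hk HN Ht0 Hpt0.
- exact: odd_wins_shift (limit_play_tail Hk HN Ht0 Hpt0).
- exact: limit_play_degree Hk HN Ht0 Hpt0.
Qed.

End CutPlay.
End CycleCutting.

Section OddGuarantees.
Variable V : finType.
Variable E : rel V.
Variable p : V -> nat.
Variable VE : pred V.

Local Notation D := (dd p).
Local Notation T := (tup p).
Local Notation M := (meas p).

Definition guarantees (u : V) (m : M) : Prop :=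
  exists sigma, strategy E VE false sigma /\
    forall pi, play E pi -> pi 0 = u -> consistent VE false sigma pi ->
      forall t, IsTheta pi t -> mle m t.

Definition guarantees_unless_loop (u : V) (m : M) : Prop :=
  exists sigma, strategy E VE false sigma /\
    forall pi, play E pi -> pi 0 = u -> consistent VE false sigma pi ->
      dominated_odd_loop p pi \/ forall t, IsTheta pi t -> mle m t.

Lemma guarantees_le u (m m' : M) : guarantees u m -> mle m' m -> guarantees u m'.
Proof.
move=> [s [Hs H]] Hle; exists s; split => // pi H1 H2 H3 t Ht.
exact: mle_trans Hle (H pi H1 H2 H3 t Ht).
Qed.

Lemma guarantees_cut u m : guarantees_unless_loop u m -> guarantees u m.
Proof.
move=> [sigma [Hs HP]]; exists (cut_strategy p sigma); split; first exact: cut_strategy_strategy.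
move=> pi Hplay Hpi0 Hcons [f|] Ht; last exact: mle_None.
have [Hnw Hf] := IsTheta_Some Ht.
have [pi' [[Hplay' Hpi'0 Hcons'] [Hnl Hw Hdeg]]] := loop_free_limit_play Hplay Hcons Hnw.
case: (HP pi' Hplay' (etrans Hpi'0 Hpi0) Hcons') => [//|HG].
have [[g|] Htg] := theta_exists p pi'; last by case: Hnw; apply/Hw/IsTheta_None.
apply: mle_trans (HG _ Htg) _; have [_ Hg] := IsTheta_Some Htg.
apply: mle_pointwise => i; have [Hg1 Hg2] := Hg i; have [Hf1 Hf2] := Hf i.
case Ho: (odd i); last by rewrite Hg1 ?Ho.
have [_ [n [Sn <-]]] := Hg2 Ho; have [n' [Sn' Hle]] := Hdeg i n Sn.
exact: leq_trans Hle ((Hf2 Ho).1 _ Sn').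
Qed.

Lemma degree_gt_card_repeat (pi : nat -> V) i n : #|[set v | p v == i]| < degree p pi i n ->
  exists a b, a < b /\ b < n /\ pi a = pi b /\ p (pi a) = i.
Proof.
move=> Hd; set s := [seq k <- iota 0 n | p (pi k) == i].
have Hsz : size s = degree p pi i n by rewrite size_filter.
have Hus : uniq s by rewrite filter_uniq // iota_uniq.
have Hnu : ~~ uniq (map pi s).
  apply/negP => Hu; move: Hd; apply/negP; rewrite -leqNgt -Hsz -(size_map pi) cardE.
  apply: uniq_leq_size Hu _ => y /mapP [k]; rewrite mem_filter => /andP [Hk _] ->.
  by rewrite mem_enum inE.
have [k1 [k2 [Hk1 [Hk2 [He Hne]]]]] :
    exists k1 k2, k1 \in s /\ k2 \in s /\ pi k1 = pi k2 /\ k1 <> k2.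
  apply: NNPP => H; suff Hinj : {in s &, injective pi}.
    by move: Hnu; rewrite (map_inj_in_uniq Hinj) Hus.
  by move=> k1 k2 Hk1 Hk2 He; apply: NNPP => Hne; apply: H; exists k1, k2.
move: Hk1 Hk2; rewrite !mem_filter !mem_iota !add0n.
move=> /andP [/eqP Hp1 /andP [_ H1]] /andP [/eqP Hp2 /andP [_ H2]].
case: (ltngtP k1 k2) => Hk; [by exists k1, k2 | by exists k2, k1 | by case: Hne].
Qed.

Lemma theta_notin_M_loop (pi : nat -> V) (f : T) :
  IsTheta pi (Some f) -> ~ inM (Some f) -> dominated_odd_loop p pi.
Proof.
move=> /IsTheta_Some [_ Hf] Hn.
have [i [Ho Hlt]] : exists i : 'I_D, odd i /\ #|[set v | p v == i]| < f i.
  apply: NNPP => H; apply: Hn => i; have [H1 _] := Hf i; split => // Ho.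
  by rewrite leqNgt; apply/negP => H2; apply: H; exists i.
have [_ [n [Sn Hn']]] := (Hf i).2 Ho.
rewrite -Hn' in Hlt; have [a [b [Hab [Hbn [He Hpa]]]]] := degree_gt_card_repeat Hlt.
exists i, a, b; do 4 split => //.
by move=> k Hk; apply: Sn; apply: leq_ltn_trans Hk Hbn.
Qed.

End OddGuarantees.

Section FirstMove.
Variable V : finType.
Variable p : V -> nat.

Local Notation D := (dd p).
Local Notation T := (tup p).
Local Notation M := (meas p).

Lemma max_degree_cons (pi : nat -> V) i c : i <= p (pi 0) ->
  max_degree p (fun n => pi n.+1) i c -> max_degree p pi i (c + (p (pi 0) == i)).
Proof.
move=> Hi [Hmax [n [Sn Hn]]]; split.
- move=> [|n'] Sn' //; rewrite degree_shift addnC leq_add2r.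
  by apply: Hmax => k Hk; apply: Sn' k.+1 Hk.
- exists n.+1; split; last by rewrite degree_shift Hn addnC.
  by move=> [|k] Hk //; apply: Sn.
Qed.

Lemma theta_cons (pi : nat -> V) f f' :
  IsTheta pi (Some f) -> IsTheta (fun n => pi n.+1) (Some f') ->
  forall i : 'I_D, i <= p (pi 0) -> f i = f' i + (odd i && (p (pi 0) == i)).
Proof.
move=> /IsTheta_Some [_ Hf] /IsTheta_Some [_ Hf'] i Hi.
have [Hf1 Hf2] := Hf i; have [Hf1' Hf2'] := Hf' i.
case Ho: (odd i); last by rewrite Hf1 ?Hf1' ?Ho.
exact: max_degree_uniq (Hf2 Ho) (max_degree_cons Hi (Hf2' Ho)).
Qed.

Section ConsTuple.
Variables (q : nat) (f f' : T).
Hypothesis Hq : q < D.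
Hypothesis Hcons : forall i : 'I_D, i <= q -> f i = f' i + (odd i && (q == i)).

Let oq := Ordinal Hq.

Lemma cons_tuple_below (i : 'I_D) : i < q -> f i = f' i.
Proof.
move=> Hi; rewrite Hcons ?(ltnW Hi) //.
by rewrite (_ : (q == i) = false) ?andbF ?addn0 //; apply/negbTE; rewrite neq_ltn Hi orbT.
Qed.

Lemma cons_tuple_odd_lt (a : T) : odd q -> mle (Some a) (Some f') -> tlt_upto q a f.
Proof.
move=> Hoq Hle; have Hfq : f oq = (f' oq).+1 by rewrite Hcons //= eqxx Hoq addn1.
case: Hle => [[->]|/mlt_Some [j [Hj1 Hj2]]].
  by exists oq; split => //; split; [move=> k Hk; rewrite cons_tuple_below | rewrite Hfq].
case: (ltnP j q) => Hjq.
  exists j; split; first exact: ltnW.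
  by split; [move=> k Hk; rewrite Hj1 // cons_tuple_below // (ltn_trans Hk Hjq) | rewrite cons_tuple_below].
exists oq; split => //; split; first by move=> k Hk; rewrite Hj1 ?cons_tuple_below // (leq_trans Hk Hjq).
rewrite Hfq ltnS; case: (ltngtP j q) Hjq => // Hjq' _; first by rewrite Hj1.
have -> : oq = j by apply: val_inj; rewrite /= Hjq'.
exact: ltnW.
Qed.

Lemma cons_tuple_even_ge (a : T) : ~~ odd q -> mle (Some a) (Some f') -> tge q f a.
Proof.
move=> Hoq Hle.
have Hfq (i : 'I_D) : i <= q -> f i = f' i.
  by move=> Hi; rewrite Hcons //; case: eqP => [<-|]; rewrite ?(negbTE Hoq) ?andbF addn0.
case: Hle => [[->]|/mlt_Some [j [Hj1 Hj2]]]; first by right => k Hk; rewrite Hfq.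
case: (leqP j q) => Hjq.
  left; exists j; split => //; split; last by rewrite Hfq.
  by move=> k Hk; rewrite Hj1 // Hfq // ltnW // (leq_trans Hk Hjq).
by right => k Hk; rewrite Hfq // Hj1 //; apply: leq_ltn_trans Hk Hjq.
Qed.

End ConsTuple.

Lemma theta_cons_prog (rho : V -> M) (pi : nat -> V) f f' :
  IsTheta pi (Some f) -> IsTheta (fun n => pi n.+1) (Some f') ->
  mle (rho (pi 1)) (Some f') -> prog_cond rho (pi 0) (pi 1) (Some f).
Proof.
move=> Ht Ht'; rewrite /prog_cond; case: (rho (pi 1)) => [a|]; last by case=> // /mlt_None.
have Hq : p (pi 0) < D by rewrite ltnS; apply: leq_bigmax.
have Hcons := theta_cons Ht Ht'.
case: ifP => Hodd Hle.
- by left; exact: (cons_tuple_odd_lt Hq Hcons Hodd Hle).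
- by have := cons_tuple_even_ge Hcons (negbT Hodd) Hle; rewrite /tge /ge_i.
Qed.

End FirstMove.

Section OddStrategy.
Variable V : finType.
Variable E : rel V.
Variable p : V -> nat.
Variable VE : pred V.
Hypothesis Etotal : forall v, exists w, E v w.

Local Notation T := (tup p).
Local Notation M := (meas p).
Local Notation guarantees := (guarantees E VE).

(* From [u], move to [w0] if [u] is Odd's, then play [next w] from the
   successor [w] actually reached; [any] only serves histories not from [u]. *)
Definition step_then (u w0 : V) (any : V -> V) (next : V -> seq V -> V) (s : seq V) : V :=
  match s with
  | [:: x] => if x == u then w0 else any x
  | x :: (y :: _) as s' => next y s'
  | [::] => u
  end.

Lemma step_then_strategy u w0 any next : E u w0 -> (forall x, E x (any x)) ->
  (forall w, strategy E VE false (next w)) -> strategy E VE false (step_then u w0 any next).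
Proof.
move=> Euw0 Hany Hnext x [|y s] Hp Ho /=; first by case: eqP => [->|_].
by move: Hp => /= /andP [_ Hp]; apply: Hnext.
Qed.

Lemma step_then_consistent u w0 any next (pi : nat -> V) : pi 0 = u ->
  consistent VE false (step_then u w0 any next) pi ->
  (u \notin VE -> pi 1 = w0) /\ consistent VE false (next (pi 1)) (fun n => pi n.+1).
Proof.
move=> Hpi0 Hcons; split.
  move=> Hu; have Ho : owned VE false (pi 0) by rewrite /owned Hpi0 (negbTE Hu).
  by rewrite (Hcons 0 Ho) /= Hpi0 eqxx.
by move=> n Ho; rewrite (Hcons n.+1 Ho) prefix_shift.
Qed.

Lemma guarantees_step (rho : V -> M) (Hrho : forall w, guarantees w (rho w))
    u w0 (Euw0 : E u w0) (m : M) :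
  (forall w, E u w -> (u \notin VE -> w = w0) ->
     forall g : T, inM (Some g) -> prog_cond rho u w (Some g) -> mle m (Some g)) ->
  guarantees_unless_loop E VE u m.
Proof.
move=> Hm.
have [any Hany] := fin_all_exists Etotal.
have [next Hnext] := fin_all_exists Hrho.
exists (step_then u w0 any next); split.
  by apply: step_then_strategy => // w; case: (Hnext w).
move=> pi Hplay Hpi0 Hcons.
case: (classic (dominated_odd_loop p pi)) => [|Hnl]; [by left | right].
move=> [f|] Ht; last exact: mle_None.
have [Hw0 Hcons'] := step_then_consistent Hpi0 Hcons.
have Hplay' : play E (fun n => pi n.+1) by move=> n; apply: Hplay.
have [[f'|] Ht'] := theta_exists p (fun n => pi n.+1); last first.
  have [Hnw _] := IsTheta_Some Ht; case: Hnw.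
  have Hsh := @odd_wins_shift _ p pi (fun n => pi n.+1) 1 0 (fun m => erefl).
  exact/Hsh/IsTheta_None.
case: (classic (inM (Some f))) => Hin; last by case: Hnl; apply: theta_notin_M_loop Ht Hin.
apply: (Hm (pi 1)) => //; first by rewrite -Hpi0; apply: Hplay.
rewrite -Hpi0; apply: (theta_cons_prog Ht Ht').
by have [_ H] := Hnext (pi 1); apply: H Hplay' erefl Hcons' _ Ht'.
Qed.

Definition tup0 : T := [ffun _ => 0].

Lemma guarantees_tup0 u : guarantees u (Some tup0).
Proof.
have [any Hany] := fin_all_exists Etotal.
exists (fun s => any (last u s)); split => // pi _ _ _ [f|] _; last exact: mle_None.
by apply: mle_pointwise => i; rewrite ffunE.
Qed.

Lemma IsProg_exists (rho : V -> M) u w : exists m, IsProg rho u w m.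
Proof.
have [|m [[Hm1 Hm2] Hm3]] := @meas_least _ p (fun m => inM m /\ prog_cond rho u w m).
  exists None; split => //; rewrite /prog_cond; case: ifP => _; case: (rho w) => [a|] //=;
    by [left | right].
by exists m; split => //; split => // m' H1 H2; apply: Hm3.
Qed.

Definition best_guarantee (rho : V -> M) : Prop :=
  forall u, (inM (rho u) /\ guarantees u (rho u)) /\
    forall m, inM m /\ guarantees u m -> mle m (rho u).

Lemma best_guarantee_exists : exists rho, best_guarantee rho.
Proof.
suff H u : exists m : M, (inM m /\ guarantees u m) /\
    forall m', inM m' /\ guarantees u m' -> mle m' m by exact: fin_all_exists H.
apply: (@meas_greatest _ p _ #|V|).
  by exists (Some tup0); split; [move=> i; rewrite ffunE | apply: guarantees_tup0].
move=> a [Ha _] i; have [H1 H2] := Ha i.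
case Ho: (odd i); last by rewrite H1 ?Ho.
exact: leq_trans (H2 Ho) (max_card _).
Qed.

Section BestGuarantee.
Variable rho : V -> M.
Hypothesis Hbest : best_guarantee rho.

Lemma best_guarantee_guarantees w : guarantees w (rho w).
Proof. exact: (Hbest w).1.2. Qed.

Lemma best_guarantee_odd u : u \notin VE -> forall w, E u w ->
  exists m, IsProg rho u w m /\ ge_i (p u) (rho u) m.
Proof.
move=> Hu w Euw; have [m Hm] := IsProg_exists rho u w.
exists m; split => //; apply: mle_ge_i; apply: (Hbest u).2; split; first by case: Hm.
apply/guarantees_cut/(guarantees_step best_guarantee_guarantees Euw) => w' _ Hw' g Hgm Hg.
by rewrite (Hw' Hu) in Hg; case: Hm => [_ [_ H]]; apply: H.
Qed.

(* If every successor's progress value exceeded [rho u], Even's best answer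
   would still leave Odd a guarantee above [rho u]. *)
Lemma best_guarantee_even u : u \in VE ->
  exists w, E u w /\ exists m, IsProg rho u w m /\ ge_i (p u) (rho u) m.
Proof.
move=> Hu; apply: NNPP => Hno.
have [prog Hprog] := fin_all_exists (IsProg_exists rho u).
have Hlt w : E u w -> mlt (rho u) (prog w).
  move=> Euw; case: (mle_total (prog w) (rho u)) => // Hle.
  by case: Hno; exists w; split => //; exists (prog w); split => //; apply: mle_ge_i.
have [w1 Hw1] := Etotal u.
have Hex : exists m, exists w, E u w /\ m = prog w by exists (prog w1), w1.
have [_ [[w2 [Ew2 ->]] Hmin]] := meas_least Hex.
have HG : guarantees u (prog w2).
  apply/guarantees_cut/(guarantees_step best_guarantee_guarantees Ew2) => w Euw _ g Hgm Hgc.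
  apply: mle_trans (Hmin (prog w) (ex_intro _ w (conj Euw erefl))) _.
  by have [_ [_ H]] := Hprog w; apply: H.
have Hin : inM (prog w2) by case: (Hprog w2).
exact: mle_mlt_false ((Hbest u).2 _ (conj Hin HG)) (Hlt w2 Ew2).
Qed.

Lemma best_guarantee_gppm : gppm E VE rho.
Proof.
split; first by move=> u; case: (Hbest u) => [[]].
by split; [exact: best_guarantee_even | exact: best_guarantee_odd].
Qed.

End BestGuarantee.

Lemma odd_strategy (rho : V -> M) (Hrho : least_gppm E VE rho) v : guarantees v (rho v).
Proof.
have [best Hbest] := best_guarantee_exists.
apply: guarantees_le (best_guarantee_guarantees Hbest v) _.
exact: Hrho.2 _ (best_guarantee_gppm Hbest) v.
Qed.

End OddStrategy.

Theorem theorem3 (V : finType) (E : rel V) (p : V -> nat) (VE : pred V)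
  (Etotal : forall v, exists w, E v w)
  (rho : V -> meas p) (Hrho : least_gppm E VE rho) (v : V) :
  (exists sigmaO : seq V -> V, strategy E VE false sigmaO /\
     forall pi : nat -> V, play E pi -> pi 0 = v -> consistent VE false sigmaO pi ->
       forall t, IsTheta pi t -> mle (rho v) t)
  /\
  (exists sigmaE : seq V -> V, strategy E VE true sigmaE /\ positional E VE true sigmaE /\
     forall pi : nat -> V, play E pi -> pi 0 = v -> consistent VE true sigmaE pi ->
       forall t, IsTheta pi t -> mle t (rho v)).
Proof.
split; first exact: (odd_strategy Etotal Hrho v).
exact: (even_positional_strategy Etotal (proj1 Hrho) v).
Qed.
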